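(* Let $m$ be a positive integer. The bra-ket $\mathcal R$-dioid $C_m$ is isomorphic, as a Kleene algebra, to its matrix Kleene algebra $\mathrm{Mat}_{m\times m}(C_m)$.
   Context: An $\mathcal R$-dioid is a dioid in which every regular subset $A$ of its multiplicative monoid has a least upper bound $\sum A$ with $\sum(AB)=(\sum A)(\sum B)$; equivalently a $*$-continuous Kleene algebra. An $\mathcal R$-congruence is a semiring congruence $\rho$ such that regular sets with equal downward closures modulo $\rho$ have congruent suprema. Let $\Delta_m=\{p_0,\dots,p_{m-1},q_0,\dots,q_{m-1}\}$ and $\mathcal R\Delta_m^*$ the algebra of regular languages over $\Delta_m$ (union, concatenation, star). The bra-ket $\mathcal R$-dioid is $C_m=\mathcal R\Delta_m^*/\rho_m$, where $\rho_m$ is the least $\mathcal R$-congruence containing $p_iq_j=\delta_{i,j}$ for $i,j<m$ and $q_0p_0+\dots+q_{m-1}p_{m-1}=1$. $\mathrm{Mat}_{m\times m}(C_m)$ carries matrix sum, product and the standard matrix star. *)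

From Stdlib Require Import ClassicalEpsilon.
From mathcomp Require Import all_boot all_algebra.

Set Implicit Arguments.
Unset Strict Implicit.
Unset Printing Implicit Defensive.

Section Generic.
Variables (D : Type) (add mul : D -> D -> D) (one : D).

Definition dle (a b : D) := add a b = b.

Definition is_lub (U : D -> Prop) (s : D) :=
  (forall u, U u -> dle u s) /\ (forall t, (forall u, U u -> dle u t) -> dle s t).

Fixpoint prodl (s : seq D) : D :=
  if s is x :: s' then mul x (prodl s') else one.

Fixpoint all_in (U : D -> Prop) (s : seq D) : Prop :=
  if s is x :: s' then U x /\ all_in U s' else True.

Inductive rat_subset : (D -> Prop) -> Prop :=
| rat_empty : rat_subset (fun _ => False)
| rat_single a : rat_subset (fun x => x = a)
| rat_union U V : rat_subset U -> rat_subset V -> rat_subset (fun x => U x \/ V x)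
| rat_prod U V : rat_subset U -> rat_subset V ->
    rat_subset (fun x => exists u v, [/\ U u, V v & x = mul u v])
| rat_star U : rat_subset U ->
    rat_subset (fun x => exists s, all_in U s /\ x = prodl s)
| rat_ext U V : rat_subset U -> (forall x, U x <-> V x) -> rat_subset V.

Definition semiring_congruence (rho : D -> D -> Prop) :=
  [/\ (forall a, rho a a), (forall a b, rho a b -> rho b a),
      (forall a b c, rho a b -> rho b c -> rho a c) &
      (forall a a' b b', rho a a' -> rho b b' ->
         rho (add a b) (add a' b') /\ rho (mul a b) (mul a' b'))].

(* the downward closure of U modulo rho, i.e. the preimage of the downward
   closure of U/rho in D/rho:  d/rho <= u/rho  iff  rho (d + u) u *)
Definition down_mod (rho : D -> D -> Prop) (U : D -> Prop) (d : D) :=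
  exists u, U u /\ rho (add d u) u.

Definition R_congruence (rho : D -> D -> Prop) :=
  semiring_congruence rho /\
  forall U V s t, rat_subset U -> rat_subset V -> is_lub U s -> is_lub V t ->
    (forall d, down_mod rho U d <-> down_mod rho V d) -> rho s t.

End Generic.

Definition letter (m : nat) := ('I_m + 'I_m)%type.
Definition p_ {m} (i : 'I_m) : letter m := inl i.
Definition q_ {m} (i : 'I_m) : letter m := inr i.
Definition word m := seq (letter m).
Definition lang m := word m -> Prop.

Section Lang.
Variable m : nat.
Definition lempty : lang m := fun _ => False.
Definition leps : lang m := fun w => w = [::].
Definition lsym (a : letter m) : lang m := fun w => w = [:: a].
Definition lunion (L1 L2 : lang m) : lang m := fun w => L1 w \/ L2 w.
Definition lconc (L1 L2 : lang m) : lang m :=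
  fun w => exists u v, [/\ L1 u, L2 v & w = u ++ v].
Definition lstar (L : lang m) : lang m :=
  fun w => exists ws : seq (word m), all_in L ws /\ w = flatten ws.

Inductive regular : lang m -> Prop :=
| reg_empty : regular lempty
| reg_eps : regular leps
| reg_sym a : regular (lsym a)
| reg_union L1 L2 : regular L1 -> regular L2 -> regular (lunion L1 L2)
| reg_conc L1 L2 : regular L1 -> regular L2 -> regular (lconc L1 L2)
| reg_star L : regular L -> regular (lstar L)
| reg_ext L1 L2 : regular L1 -> (forall w, L1 w <-> L2 w) -> regular L2.

Definition RL := {L : lang m | regular L}.
Definition rzero : RL := exist _ _ reg_empty.
Definition rone : RL := exist _ _ reg_eps.
Definition rsym a : RL := exist _ _ (reg_sym a).
Definition radd (x y : RL) : RL := exist _ _ (reg_union (proj2_sig x) (proj2_sig y)).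
Definition rmul (x y : RL) : RL := exist _ _ (reg_conc (proj2_sig x) (proj2_sig y)).
Definition rstar (x : RL) : RL := exist _ _ (reg_star (proj2_sig x)).

Definition braket_gens (rho : RL -> RL -> Prop) :=
  (forall i j : 'I_m,
     rho (rmul (rsym (p_ i)) (rsym (q_ j))) (if i == j then rone else rzero)) /\
  rho (\big[radd/rzero]_(i < m) rmul (rsym (q_ i)) (rsym (p_ i))) rone.

Definition rho_m (x y : RL) : Prop :=
  forall rho, R_congruence radd rmul rone rho -> braket_gens rho -> rho x y.

Definition Cm := {P : RL -> Prop | exists x, P = rho_m x}.
Definition cls (x : RL) : Cm := exist _ (rho_m x) (ex_intro _ x erefl).
Definition rep (c : Cm) : RL :=
  proj1_sig (constructive_indefinite_description _ (proj2_sig c)).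
Definition cadd (c d : Cm) : Cm := cls (radd (rep c) (rep d)).
Definition cmul (c d : Cm) : Cm := cls (rmul (rep c) (rep d)).
Definition czero : Cm := cls rzero.
Definition cone : Cm := cls rone.
Definition cstar (c : Cm) : Cm := cls (rstar (rep c)).
End Lang.

Record kleene_ops := KleeneOps {
  kcar :> Type;
  kadd : kcar -> kcar -> kcar;
  kmul : kcar -> kcar -> kcar;
  kzero : kcar;
  kone : kcar;
  kstar : kcar -> kcar }.

Definition KA_iso (A B : kleene_ops) (f : A -> B) :=
  bijective f /\
  (forall x y, f (kadd x y) = kadd (f x) (f y)) /\
  (forall x y, f (kmul x y) = kmul (f x) (f y)) /\
  f (kzero A) = kzero B /\ f (kone A) = kone B /\
  (forall x, f (kstar x) = kstar (f x)).

Definition C_KA (m : nat) : kleene_ops :=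
  @KleeneOps (Cm m) (@cadd m) (@cmul m) (czero m) (cone m) (@cstar m).

Section Matrices.
Variable A : kleene_ops.

(* standard matrix star, by the block decomposition
   [[a, b], [c, d]]^* = [[f, f b d*], [d* c f, d* + d* c f b d*]]
   with f = (a + b d* c)^*, a of size 1x1 *)
Fixpoint mstarf (n : nat) : ('I_n -> 'I_n -> A) -> 'I_n -> 'I_n -> A :=
  match n return ('I_n -> 'I_n -> A) -> 'I_n -> 'I_n -> A with
  | 0 => fun _ _ _ => kzero A
  | n'.+1 => fun M =>
      let a := M ord0 ord0 in
      let b := fun j : 'I_n' => M ord0 (lift ord0 j) in
      let c := fun i : 'I_n' => M (lift ord0 i) ord0 in
      let ds := mstarf (fun i j : 'I_n' => M (lift ord0 i) (lift ord0 j)) in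
      let bds := fun j : 'I_n' => \big[@kadd A/kzero A]_(k < n') kmul (b k) (ds k j) in
      let dsc := fun i : 'I_n' => \big[@kadd A/kzero A]_(k < n') kmul (ds i k) (c k) in
      let f := kstar (kadd a (\big[@kadd A/kzero A]_(k < n') kmul (bds k) (c k))) in
      fun i j =>
        match unlift ord0 i, unlift ord0 j with
        | None, None => f
        | None, Some j' => kmul f (bds j')
        | Some i', None => kmul (dsc i') f
        | Some i', Some j' => kadd (ds i' j') (kmul (kmul (dsc i') f) (bds j'))
        end
  end.

Variable n : nat.
Definition mzero : 'M[A]_n := \matrix_(i, j) kzero A.
Definition mone : 'M[A]_n := \matrix_(i, j) if i == j then kone A else kzero A.
Definition madd (M N : 'M[A]_n) : 'M[A]_n := \matrix_(i, j) kadd (M i j) (N i j).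
Definition mmul (M N : 'M[A]_n) : 'M[A]_n :=
  \matrix_(i, j) \big[@kadd A/kzero A]_(k < n) kmul (M i k) (N k j).
Definition mstar (M : 'M[A]_n) : 'M[A]_n :=
  \matrix_(i, j) mstarf (fun i j => M i j) i j.

Definition Mat_KA : kleene_ops := @KleeneOps 'M[A]_n madd mmul mzero mone mstar.
End Matrices.

(* In C_m the letters satisfy p_i q_j = delta_ij and sum_i q_i p_i = 1, so x |-> (p_i x q_j)_ij
   is a semiring isomorphism C_m ~ Mat_m(C_m), with inverse M |-> sum_ij q_i M_ij p_j.  It also
   preserves the star, because in both algebras x^* is the least y with 1 + x y <= y: in C_m
   because x^* u is the supremum of the regular set {x^k u}, which an R-congruence has to
   respect; in Mat_m(C_m) by induction on the size through the block formula for the matrix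
   star, using only the left star laws of C_m.  Semiring isomorphisms preserve such least
   solutions. *)

From Stdlib Require Import ClassicalEpsilon FunctionalExtensionality.
From Stdlib Require Import PropExtensionality ProofIrrelevance.
From HB Require Import structures.
From mathcomp Require Import all_boot all_algebra.

Set Implicit Arguments.
Unset Strict Implicit.
Unset Printing Implicit Defensive.

Declare Scope ka_scope.
Delimit Scope ka_scope with K.
Notation "0" := (kzero _) : ka_scope.
Notation "1" := (kone _) : ka_scope.
Notation "x + y" := (@kadd _ x y) : ka_scope.
Notation "x * y" := (@kmul _ x y) : ka_scope.
Notation "x ^*" := (@kstar _ x) : ka_scope.
Notation "x <= y" := (dle (@kadd _) x y) : ka_scope.
Notation "\sum_ ( i < n ) F" := (\big[@kadd _/kzero _]_(i < n) F%K) : ka_scope.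

Record idem_semiring (A : kleene_ops) : Prop := IdemSemiring {
  addkA : associative (@kadd A);
  addkC : commutative (@kadd A);
  add0k : left_id (kzero A) (@kadd A);
  addkk : idempotent_op (@kadd A);
  mulkA : associative (@kmul A);
  mul1k : left_id (kone A) (@kmul A);
  mulk1 : right_id (kone A) (@kmul A);
  mul0k : left_zero (kzero A) (@kmul A);
  mulk0 : right_zero (kzero A) (@kmul A);
  mulkDl : left_distributive (@kmul A) (@kadd A);
  mulkDr : right_distributive (@kmul A) (@kadd A) }.

Definition star_unfold_le (A : kleene_ops) := forall x : A, (1 + x * x^* <= x^*)%K.

Definition star_left_ind (A : kleene_ops) :=
  forall x u y : A, (u + x * y <= y -> x^* * u <= y)%K.

Definition star_least (A : kleene_ops) :=
  forall x : A, (1 + x * x^* <= x^*)%K /\ forall y, (1 + x * y <= y -> x^* <= y)%K.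

Lemma idem_semiring_image (A B : kleene_ops) (h : A -> B) (g : B -> A) :
  cancel g h -> {morph h : x y / (x + y)%K} -> {morph h : x y / (x * y)%K} ->
  h 0%K = 0%K -> h 1%K = 1%K -> idem_semiring A -> idem_semiring B.
Proof.
move=> gK hD hM h0 h1 [addA addC add0 addI mulA mul1 mul1' mul0 mul0' mulDl mulDr].
have h_ind (P : B -> Prop) : (forall x, P (h x)) -> forall y, P y.
  by move=> Ph y; rewrite -(gK y).
constructor.
- by elim/h_ind=> x; elim/h_ind=> y; elim/h_ind=> z; rewrite -!hD addA.
- by elim/h_ind=> x; elim/h_ind=> y; rewrite -!hD addC.
- by elim/h_ind=> x; rewrite -h0 -hD add0.
- by elim/h_ind=> x; rewrite -hD addI.
- by elim/h_ind=> x; elim/h_ind=> y; elim/h_ind=> z; rewrite -!hM mulA.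
- by elim/h_ind=> x; rewrite -h1 -hM mul1.
- by elim/h_ind=> x; rewrite -h1 -hM mul1'.
- by elim/h_ind=> x; rewrite -h0 -hM mul0.
- by elim/h_ind=> x; rewrite -h0 -hM mul0'.
- by elim/h_ind=> x; elim/h_ind=> y; elim/h_ind=> z; rewrite -hD -!hM -hD mulDl.
- by elim/h_ind=> x; elim/h_ind=> y; elim/h_ind=> z; rewrite -hD -!hM -hD mulDr.
Qed.

Section IdemSemiring.
Variables (A : kleene_ops) (HA : idem_semiring A).
Local Open Scope ka_scope.

HB.instance Definition _ :=
  Monoid.isComLaw.Build A 0 (@kadd A) (addkA HA) (addkC HA) (add0k HA).
HB.instance Definition _ := Monoid.isMulLaw.Build A 0 (@kmul A) (mul0k HA) (mulk0 HA).
HB.instance Definition _ :=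
  Monoid.isAddLaw.Build A (@kmul A) (@kadd A) (mulkDl HA) (mulkDr HA).

Lemma dle_refl (x : A) : x <= x.
Proof. exact: addkk. Qed.

Lemma dle_trans (y x z : A) : x <= y -> y <= z -> x <= z.
Proof. by rewrite /dle => xy yz; rewrite -yz (addkA HA) xy. Qed.

Lemma dle_addl (x y : A) : x <= x + y.
Proof. by rewrite /dle (addkA HA) addkk. Qed.

Lemma dle_addr (x y : A) : y <= x + y.
Proof. by rewrite /dle (addkC HA) -(addkA HA) addkk. Qed.

Lemma dle_addP (x y z : A) : x + y <= z <-> x <= z /\ y <= z.
Proof.
split=> [xyz | [xz yz]]; last by rewrite /dle -(addkA HA) yz xz.
by split; apply: dle_trans xyz; [apply: dle_addl | apply: dle_addr].
Qed.

Lemma dle_add2 (x x' y y' : A) : x <= x' -> y <= y' -> x + y <= x' + y'.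
Proof.
move=> xx' yy'; apply/dle_addP; split.
  exact: dle_trans xx' (dle_addl _ _).
exact: dle_trans yy' (dle_addr _ _).
Qed.

Lemma dle_mul2l (z x y : A) : x <= y -> z * x <= z * y.
Proof. by rewrite /dle => xy; rewrite -(mulkDr HA) xy. Qed.

Lemma dle_mul2r (z x y : A) : x <= y -> x * z <= y * z.
Proof. by rewrite /dle => xy; rewrite -(mulkDl HA) xy. Qed.

Lemma dle_sum n (F G : 'I_n -> A) :
  (forall i, F i <= G i) -> \sum_(i < n) F i <= \sum_(i < n) G i.
Proof. by move=> FG; apply: (big_ind2 (dle (@kadd A))); [apply: dle_refl | apply: dle_add2 |]. Qed.

Definition kdelta n (i j : 'I_n) : A := if i == j then 1 else 0.

Lemma sum_kdelta_l n (i : 'I_n) (F : 'I_n -> A) : \sum_(t < n) kdelta i t * F t = F i.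
Proof.
rewrite (bigD1 i) //= big1 => [|t ti]; first by rewrite /kdelta eqxx (mul1k HA) Monoid.mulm1.
by rewrite /kdelta eq_sym (negbTE ti) (mul0k HA).
Qed.

Lemma sum_kdelta_r n (j : 'I_n) (F : 'I_n -> A) : \sum_(t < n) F t * kdelta t j = F j.
Proof.
rewrite (bigD1 j) //= big1 => [|t tj]; first by rewrite /kdelta eqxx (mulk1 HA) Monoid.mulm1.
by rewrite /kdelta (negbTE tj) (mulk0 HA).
Qed.

Lemma big_mulA n k (u : 'I_n -> A) (N : 'I_n -> 'I_k -> A) (v : 'I_k -> A) :
  \sum_(s < n) u s * (\sum_(t < k) N s t * v t) = \sum_(t < k) (\sum_(s < n) u s * N s t) * v t.
Proof.
under eq_bigr do rewrite big_distrr.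
under [RHS]eq_bigr do rewrite big_distrl.
by rewrite exchange_big; apply: eq_bigr => t _; apply: eq_bigr => s _; apply: mulkA.
Qed.

(** * The star of block matrices *)

Section MatrixStar.
Hypotheses (unfoldA : star_unfold_le A) (indA : star_left_ind A).

Definition fmul n k l (X : 'I_n -> 'I_k -> A) (Y : 'I_k -> 'I_l -> A) i j :=
  \sum_(t < k) X i t * Y t j.

Section Block.
Variables (n : nat) (M : 'I_n.+1 -> 'I_n.+1 -> A).
Let a := M ord0 ord0.
Let b (j : 'I_n) := M ord0 (lift ord0 j).
Let c (i : 'I_n) := M (lift ord0 i) ord0.
Let D (i j : 'I_n) := M (lift ord0 i) (lift ord0 j).
Let ds := mstarf D.
Let bds (j : 'I_n) := \sum_(k < n) b k * ds k j.
Let dsc (i : 'I_n) := \sum_(k < n) ds i k * c k.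
Let bdsc := \sum_(k < n) bds k * c k.
Let f := (a + bdsc)^*.

Lemma mstarf00 : mstarf M ord0 ord0 = f.
Proof. by rewrite /= unlift_none. Qed.

Lemma mstarf0S j : mstarf M ord0 (lift ord0 j) = f * bds j.
Proof. by rewrite /= unlift_none liftK. Qed.

Lemma mstarfS0 i : mstarf M (lift ord0 i) ord0 = dsc i * f.
Proof. by rewrite /= unlift_none liftK. Qed.

Lemma mstarfSS i j : mstarf M (lift ord0 i) (lift ord0 j) = ds i j + dsc i * f * bds j.
Proof. by rewrite /= !liftK. Qed.

Lemma sum_b_dsc z : \sum_(k < n) b k * (dsc k * z) = bdsc * z.
Proof.
under eq_bigr do rewrite (mulkA HA).
by rewrite -big_distrl /bdsc /dsc big_mulA.
Qed.

Lemma f_absorb z : (a * (f * z) <= f * z) /\ (bdsc * (f * z) <= f * z).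
Proof.
apply/dle_addP; rewrite -(mulkDl HA) (mulkA HA); apply: dle_mul2r.
by have /dle_addP[] := unfoldA (a + bdsc).
Qed.

Lemma dle_f_mul z : z <= f * z.
Proof.
rewrite -{1}[z](mul1k HA); apply: dle_mul2r.
by have /dle_addP[] := unfoldA (a + bdsc).
Qed.

Section Unfold.
Hypothesis ds_unfold : forall i j, kdelta i j + fmul D ds i j <= ds i j.

Lemma dsc_unfold i : c i + \sum_(k < n) D i k * dsc k <= dsc i.
Proof.
rewrite -(sum_kdelta_l i c) big_mulA -big_split /=.
by apply: dle_sum => t; rewrite -(mulkDl HA); apply: dle_mul2r; apply: ds_unfold.
Qed.

Lemma mstarf_unfold_step i j :
  kdelta i j + fmul M (mstarf M) i j <= mstarf M i j.
Proof.
rewrite /fmul big_ord_recl /kdelta.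
case: (unliftP ord0 i) => [i'|] ->; case: (unliftP ord0 j) => [j'|] ->.
- rewrite mstarf0S mstarfSS (inj_eq (@lift_inj _ ord0)).
  under eq_bigr do rewrite mstarfSS (mulkDr HA).
  rewrite big_split /=.
  move/dle_addP: (ds_unfold i' j') => [delta_le Dds_le].
  have cDdsc_le : c i' * (f * bds j') + \sum_(t < n) D i' t * (dsc t * f * bds j')
                  <= dsc i' * f * bds j'.
    under eq_bigr do rewrite -(mulkA HA) (mulkA HA).
    rewrite -big_distrl -(mulkDl HA) -(mulkA HA).
    by apply: dle_mul2r; apply: dsc_unfold.
  move/dle_addP: cDdsc_le => [c_le Ddsc_le].
  apply/dle_addP; split; first exact: dle_trans delta_le (dle_addl _ _).
  apply/dle_addP; split; first exact: dle_trans c_le (dle_addr _ _).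
  by apply: dle_add2.
- rewrite mstarfS0 mstarf00 eq_sym (negbTE (neq_lift _ _)) (add0k HA).
  under eq_bigr do rewrite mstarfS0 (mulkA HA).
  by rewrite -big_distrl -(mulkDl HA); apply: dle_mul2r; apply: dsc_unfold.
- rewrite mstarf0S (negbTE (neq_lift _ _)) (add0k HA).
  under eq_bigr do rewrite mstarfSS -(mulkA HA (dsc _)) (mulkDr HA).
  rewrite big_split /= sum_b_dsc.
  have [af Xf] := f_absorb (bds j').
  by apply/dle_addP; split => //; apply/dle_addP; split => //; apply: dle_f_mul.
- rewrite mstarf00 eqxx.
  under eq_bigr do rewrite mstarfS0.
  by rewrite sum_b_dsc -(mulkDl HA); apply: unfoldA.
Qed.

End Unfold.

Section Induction.
Hypothesis ds_ind : forall k (X Y : 'I_n -> 'I_k -> A),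
  (forall i j, X i j + fmul D Y i j <= Y i j) -> forall i j, fmul ds X i j <= Y i j.
Variables (k : nat) (X Y : 'I_n.+1 -> 'I_k -> A).
Hypothesis XY : forall i l, X i l + fmul M Y i l <= Y i l.

Let x l := X ord0 l.
Let y l := Y ord0 l.
Let Xs i l := X (lift ord0 i) l.
Let Ys i l := Y (lift ord0 i) l.
Let Xc i l := Xs i l + c i * y l.

(* The lower rows are solved by the induction hypothesis for [D] with right-hand side [Xc];
   this reduces the top row to [x + (a + b D^* c) y <= y], solved by scalar star induction. *)

Lemma ds_Xc_le i l : fmul ds Xc i l <= Ys i l.
Proof.
apply: ds_ind => {}i {}l.
by rewrite -(addkA HA); have := XY (lift ord0 i) l; rewrite /fmul big_ord_recl.
Qed.

Lemma mstarf_ind_row0 l : f * (x l + \sum_(t < n) bds t * Xs t l) <= y l.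
Proof.
have := XY ord0 l; rewrite /fmul big_ord_recl => /dle_addP[x_le /dle_addP[ay_le bY_le]].
have bdsXc_le : \sum_(t < n) bds t * Xc t l <= y l.
  rewrite /bds -big_mulA; apply: dle_trans bY_le; apply: dle_sum => s.
  exact: dle_mul2l (ds_Xc_le s l).
apply: indA; apply/dle_addP; split.
  apply/dle_addP; split => //; apply: dle_trans bdsXc_le.
  by apply: dle_sum => t; apply: dle_mul2l; apply: dle_addl.
rewrite (mulkDl HA); apply/dle_addP; split => //.
rewrite /bdsc big_distrl /=; apply: dle_trans bdsXc_le; apply: dle_sum => t.
by rewrite -(mulkA HA); apply: dle_mul2l; apply: dle_addr.
Qed.

Lemma mstarf_ind_step i l : fmul (mstarf M) X i l <= Y i l.
Proof.
rewrite /fmul big_ord_recl; case: (unliftP ord0 i) => [i'|] ->; last first.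
  under eq_bigr do rewrite mstarf0S -(mulkA HA).
  by rewrite mstarf00 -big_distrr -(mulkDr HA); apply: mstarf_ind_row0.
have Xc_split : fmul ds Xc i' l = \sum_(t < n) ds i' t * Xs t l + dsc i' * y l.
  rewrite /fmul /Xc; under eq_bigr do rewrite (mulkDr HA).
  rewrite big_split /= /dsc big_distrl /=; congr (_ + _).
  by apply: eq_bigr => t _; rewrite (mulkA HA).
have := ds_Xc_le i' l; rewrite Xc_split => /dle_addP[dsXs_le dscy_le].
have : dsc i' * f * x l + \sum_(t < n) dsc i' * f * bds t * Xs t l <= dsc i' * y l.
  under eq_bigr do rewrite -!(mulkA HA).
  by rewrite -!big_distrr /= -!(mulkA HA) -!(mulkDr HA); apply: dle_mul2l; apply: mstarf_ind_row0.
move=> /dle_addP[dscx_le dscbds_le].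
rewrite mstarfS0; under eq_bigr do rewrite mstarfSS (mulkDl HA).
rewrite big_split /=; apply/dle_addP; split; first exact: dle_trans dscx_le dscy_le.
by apply/dle_addP; split => //; apply: dle_trans dscbds_le dscy_le.
Qed.

End Induction.
End Block.

Lemma mstarf_unfold n (M : 'I_n -> 'I_n -> A) i j :
  kdelta i j + fmul M (mstarf M) i j <= mstarf M i j.
Proof.
elim: n M i j => [|n IH] M; first by case.
exact: mstarf_unfold_step.
Qed.

Lemma mstarf_ind n (M : 'I_n -> 'I_n -> A) k (X Y : 'I_n -> 'I_k -> A) :
  (forall i l, X i l + fmul M Y i l <= Y i l) -> forall i l, fmul (mstarf M) X i l <= Y i l.
Proof.
elim: n M k X Y => [|n IH] M k X Y XY; first by case.
exact: (mstarf_ind_step (IH _) XY).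
Qed.

Lemma star_least_left_ind : star_least A.
Proof.
move=> x; split=> [|y le_y]; first exact: unfoldA.
by rewrite -[x^*](mulk1 HA); apply: indA.
Qed.

Lemma dle_mxP n (P Q : 'M[A]_n) : dle (@madd A n) P Q <-> forall i j, P i j <= Q i j.
Proof.
split=> [/matrixP PQ i j | PQ]; first by have := PQ i j; rewrite mxE.
by apply/matrixP => i j; rewrite mxE; apply: PQ.
Qed.

Lemma mat_star_least n : star_least (Mat_KA A n).
Proof.
move=> M; split=> [|Y le_Y]; apply/dle_mxP => i j.
  rewrite !mxE; under eq_bigr do rewrite mxE.
  exact: mstarf_unfold.
rewrite mxE -(sum_kdelta_r j); apply: mstarf_ind => {}i {}j.
by have /dle_mxP := le_Y; move/(_ i j); rewrite !mxE.
Qed.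

End MatrixStar.

Lemma mat_addC n : commutative (@madd A n).
Proof. by move=> P Q; apply/matrixP => i j; rewrite !mxE (addkC HA). Qed.

Section BraKet.
Variables (m : nat) (p q : 'I_m -> A).
Hypotheses (pq : forall i j, p i * q j = kdelta i j) (qp : \sum_(i < m) q i * p i = 1).

Definition braket_mx (x : A) : 'M[A]_m := \matrix_(i, j) (p i * x * q j).

Definition braket_unmx (M : 'M[A]_m) : A := \sum_(i < m) \sum_(j < m) q i * M i j * p j.

Lemma braket_mxK : cancel braket_mx braket_unmx.
Proof.
move=> x; have {2}-> : x = (\sum_(i < m) q i * p i) * x * (\sum_(j < m) q j * p j).
  by rewrite qp (mul1k HA) (mulk1 HA).
rewrite !big_distrl /=; apply: eq_bigr => i _; rewrite big_distrr /=.
by apply: eq_bigr => j _; rewrite mxE !(mulkA HA).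
Qed.

Lemma braket_unmxK : cancel braket_unmx braket_mx.
Proof.
move=> M; apply/matrixP => k l; rewrite mxE big_distrr big_distrl /=.
transitivity (\sum_(i < m) kdelta k i * \sum_(j < m) M i j * kdelta j l).
  apply: eq_bigr => i _; rewrite !big_distrr big_distrl /=.
  by apply: eq_bigr => j _; rewrite -!pq !(mulkA HA).
by rewrite sum_kdelta_l sum_kdelta_r.
Qed.

Lemma braket_mxD x y : braket_mx (x + y) = madd (braket_mx x) (braket_mx y).
Proof. by apply/matrixP => i j; rewrite !mxE (mulkDr HA) (mulkDl HA). Qed.

Lemma braket_mxM x y : braket_mx (x * y) = mmul (braket_mx x) (braket_mx y).
Proof.
apply/matrixP => i j; rewrite !mxE; under eq_bigr do rewrite !mxE.
transitivity (p i * x * (\sum_(k < m) q k * p k) * (y * q j)).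
  by rewrite qp (mulk1 HA) !(mulkA HA).
by rewrite big_distrr big_distrl /=; apply: eq_bigr => k _; rewrite !(mulkA HA).
Qed.

Lemma braket_mx0 : braket_mx 0 = mzero A m.
Proof. by apply/matrixP => i j; rewrite !mxE (mulk0 HA) (mul0k HA). Qed.

Lemma braket_mx1 : braket_mx 1 = mone A m.
Proof. by apply/matrixP => i j; rewrite !mxE (mulk1 HA) pq. Qed.

End BraKet.

End IdemSemiring.

Section KleeneIso.
Variables (A B : kleene_ops) (f : A -> B).
Hypotheses (addBC : commutative (@kadd B)) (starA : star_least A) (starB : star_least B).
Hypotheses (f_bij : bijective f) (fD : {morph f : x y / (x + y)%K}).
Hypotheses (fM : {morph f : x y / (x * y)%K}) (f0 : f 0%K = 0%K) (f1 : f 1%K = 1%K).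
Local Open Scope ka_scope.

Lemma semiring_iso_star : {morph f : x / x^*}.
Proof.
have [g fK gK] := f_bij.
have gD : {morph g : x y / x + y} by move=> x y; apply: (can_inj fK); rewrite fD !gK.
have gM : {morph g : x y / x * y} by move=> x y; apply: (can_inj fK); rewrite fM !gK.
have g1 : g 1 = 1 by rewrite -f1 fK.
move=> x; have [unfA indAx] := starA x; have [unfB indBx] := starB (f x).
have le1 : (f x)^* <= f (x^*).
  by apply: indBx; rewrite -f1 -fM -fD /dle -fD unfA.
have le2 : f (x^*) <= (f x)^*.
  have : x^* <= g ((f x)^*).
    by apply: indAx; rewrite -g1 -{1}[x]fK -gM -gD /dle -gD unfB.
  by rewrite /dle => le; rewrite -[in RHS](gK (f x)^*) -le fD gK.
by rewrite -[LHS]le1 addBC le2.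
Qed.

Lemma semiring_iso_KA_iso : KA_iso f.
Proof. by do 5 (split=> //); apply: semiring_iso_star. Qed.

End KleeneIso.

(** * The bra-ket quotient *)

Definition RL_KA m := KleeneOps (@radd m) (@rmul m) (rzero m) (rone m) (@rstar m).
Canonical RL_KA.
Canonical C_KA.

Section BraKetQuotient.
Variable m : nat.
Local Open Scope ka_scope.
Local Notation L x := (proj1_sig x).

Lemma RL_eq (x y : RL m) : (forall w, L x w <-> L y w) -> x = y.
Proof.
case: x y => [Lx regx] [Ly regy] /= xy.
have eL : Lx = Ly.
  by apply: functional_extensionality => w; apply: propositional_extensionality.
by subst; congr exist; apply: proof_irrelevance.
Qed.

Lemma RL_idem_semiring : idem_semiring (RL_KA m).
Proof.
constructor=> [x y z|x y|x|x|x y z|x|x|x|x|x y z|x y z]; apply: RL_eq => w /=;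
  rewrite /lunion /lconc /lempty /leps.
- by tauto.
- by tauto.
- by tauto.
- by tauto.
- split=> [[u [v [xu [u1 [v1 [yu1 zv1 ->]]] ->]]] | [u [v [[u1 [v1 [xu1 yv1 ->]]] zv ->]]]].
    by exists (u ++ u1), v1; rewrite catA; split=> //; exists u, u1.
  by exists u1, (v1 ++ v); rewrite catA; split=> //; exists v1, v.
- by split=> [[u [v [-> xv ->]]] | xw] //; exists [::], w.
- by split=> [[u [v [xu -> ->]]] | xw]; [rewrite cats0 | exists w, [::]; rewrite cats0].
- by split=> [[u [v []]] | []].
- by split=> [[u [v []]] | []].
- split=> [[u [v [[xu|yu] zv ->]]] | [[u [v [xu zv ->]]] | [u [v [yu zv ->]]]]].
  + by left; exists u, v.
  + by right; exists u, v.
  + by exists u, v; split=> //; left.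
  + by exists u, v; split=> //; right.
- split=> [[u [v [xu [yv|zv] ->]]] | [[u [v [xu yv ->]]] | [u [v [xu zv ->]]]]].
  + by left; exists u, v.
  + by right; exists u, v.
  + by exists u, v; split=> //; left.
  + by exists u, v; split=> //; right.
Qed.

Lemma rstar_unfold (r : RL m) : r^* = 1 + r * r^*.
Proof.
apply: RL_eq => w /=; rewrite /lstar /lunion /leps /lconc.
split=> [[[|w1 ws] [/= ws_r ->]] | [-> | [u [v [ru [ws [ws_r ->]] ->]]]]].
- by left.
- by right; case: ws_r => rw1 ws_r; exists w1, (flatten ws); split=> //; exists ws.
- by exists [::].
- by exists (u :: ws).
Qed.

Lemma dle_RLP (x y : RL m) : x <= y <-> forall w, L x w -> L y w.
Proof.
split=> [<- w xw | xy]; first by left.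
by apply: RL_eq => w /=; rewrite /lunion; split=> [[/xy|]|] //; right.
Qed.

Lemma rstar_prodlP (r : RL m) w :
  L (r^*) w <-> exists2 s, all_in (fun y => y = r) s & L (prodl (@rmul m) (rone m) s) w.
Proof.
split=> [[ws [ws_r ->]] | [s]].
  elim: ws ws_r => [|u ws IH] /=; first by exists [::].
  case=> ru /IH[s s_r sw]; exists (r :: s) => //=.
  by exists u, (flatten ws).
elim: s w => [|x s IH] w /=; first by move=> _ ->; exists [::].
case=> -> /IH s_r [u [v [ru /s_r[ws [ws_r ->]] ->]]].
by exists (u :: ws).
Qed.

Lemma rho_m_congruence : semiring_congruence (@radd m) (@rmul m) (@rho_m m).
Proof.
split.
- by move=> x rho [[refl _ _ _] _] _; apply: refl.
- move=> x y xy rho rhoR gens; have [[_ sym _ _] _] := rhoR.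
  exact: sym (xy _ rhoR gens).
- move=> x y z xy yz rho rhoR gens; have [[_ _ trans _] _] := rhoR.
  exact: trans (xy _ rhoR gens) (yz _ rhoR gens).
- move=> x x' y y' xx' yy'; split=> rho rhoR gens; have [[_ _ _ cong] _] := rhoR.
    exact: (cong _ _ _ _ (xx' _ rhoR gens) (yy' _ rhoR gens)).1.
  exact: (cong _ _ _ _ (xx' _ rhoR gens) (yy' _ rhoR gens)).2.
Qed.

Lemma cls_eqP (x y : RL m) : cls x = cls y <-> rho_m x y.
Proof.
have [refl sym trans _] := rho_m_congruence.
split=> [xy | xy]; first by have : proj1_sig (cls x) y by rewrite xy; apply: refl.
have e : rho_m x = rho_m y.
  apply: functional_extensionality => z; apply: propositional_extensionality.
  by split; apply: trans; [apply: sym |].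
rewrite /cls; move: (ex_intro _ x _) (ex_intro _ y _); rewrite e => ex ey.
by congr exist; apply: proof_irrelevance.
Qed.

Lemma repK : cancel (@rep m) (@cls m).
Proof.
move=> [P exP]; rewrite /rep; case: constructive_indefinite_description => x /= ePx.
by subst P; rewrite /cls; congr exist; apply: proof_irrelevance.
Qed.

Lemma rep_cls (x : RL m) : rho_m (rep (cls x)) x.
Proof. by apply/cls_eqP; rewrite repK. Qed.

Lemma clsD : {morph @cls m : x y / x + y}.
Proof.
move=> x y; apply/cls_eqP; have [_ sym _ cong] := rho_m_congruence.
by apply: sym; exact: (cong _ _ _ _ (rep_cls x) (rep_cls y)).1.
Qed.

Lemma clsM : {morph @cls m : x y / x * y}.
Proof.
move=> x y; apply/cls_eqP; have [_ sym _ cong] := rho_m_congruence.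
by apply: sym; exact: (cong _ _ _ _ (rep_cls x) (rep_cls y)).2.
Qed.

Lemma Cm_idem_semiring : idem_semiring (C_KA m).
Proof. exact: idem_semiring_image repK clsD clsM _ _ RL_idem_semiring. Qed.

Lemma cstar_unfold (c : Cm m) : c^* = 1 + c * c^*.
Proof. by transitivity (cls (rep c)^*); rewrite // rstar_unfold clsD clsM repK. Qed.

Lemma Cm_star_unfold_le : star_unfold_le (C_KA m).
Proof. by move=> c; rewrite /dle -cstar_unfold; apply: (addkk Cm_idem_semiring). Qed.

Lemma dle_clsP (x y : RL m) : cls x <= cls y <-> rho_m (x + y) y.
Proof. by rewrite /dle -clsD; apply: cls_eqP. Qed.

(* Apply the R-congruence property to [U] extended by [t] and to the singleton [t]: modulo
   [rho] both have the downward closure of [t]. *)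
Lemma lub_transfer (U : RL m -> Prop) s t :
  rat_subset (@rmul m) (rone m) U -> is_lub (@radd m) U s ->
  (forall u, U u -> cls u <= cls t) -> cls s <= cls t.
Proof.
have HR := RL_idem_semiring.
move=> U_rat [s_ub s_least] U_le; apply/dle_clsP => rho rhoR gens.
have [[refl sym trans cong] rho_sup] := rhoR.
apply: (rho_sup (fun x => U x \/ x = t) (fun x => x = t)).
- by apply: rat_union => //; apply: rat_single.
- exact: rat_single.
- split=> [u [Uu | ->] | t' t'_ub].
  + exact: (dle_trans HR (s_ub u Uu) (dle_addl HR _ _)).
  + exact: dle_addr.
  + by apply/(dle_addP HR); split; [apply: s_least => u Uu |]; apply: t'_ub; [left | right].
- by split=> [u -> | t' t'_ub]; [apply: (dle_refl HR) | apply: t'_ub].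
- move=> d; split=> [[u [[Uu | ->] du]] | [u [-> du]]];
    [exists t; split=> // | by exists t | by exists t; split=> //; right].
  have ut : rho (u + t) t by apply: (proj1 (dle_clsP u t) (U_le u Uu)).
  have d_ut : rho (d + t) (d + (u + t)) := (cong _ _ _ _ (refl d) (sym _ _ ut)).1.
  have := (cong _ _ _ _ du (refl t)).1; rewrite -(addkA HR) => du_t.
  exact: trans d_ut (trans _ _ _ du_t ut).
Qed.

Lemma Cm_star_left_ind : star_left_ind (C_KA m).
Proof.
(* [c^* u] is the class of the supremum of the regular set [(rep c)^k (rep u)], all of whose
   elements lie below [v] modulo [rho_m]. *)
have HC := Cm_idem_semiring.
move=> c u v /(dle_addP HC)[u_le cv_le].
have -> : c^* * u = cls ((rep c)^* * rep u) by rewrite clsM repK.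
rewrite -(repK v); apply: lub_transfer (rat_prod (rat_star (rat_single _ _ (rep c)))
                                                  (rat_single _ _ (rep u))) _ _.
  split=> [x [a [b [[s [s_c ->]] -> ->]]] | t t_ub].
    apply/dle_RLP => w [w1 [w2 [w1s w2u ->]]]; exists w1, w2; split=> //.
    by apply/rstar_prodlP; exists s.
  apply/dle_RLP => w [w1 [w2 [/rstar_prodlP[s s_c w1s] w2u ->]]].
  have /dle_RLP : prodl (@rmul m) (rone m) s * rep u <= t.
    by apply: t_ub; exists (prodl (@rmul m) (rone m) s), (rep u); split=> //; exists s.
  by apply; exists w1, w2.
move=> x [a [b [[s [s_c ->]] -> ->]]]; rewrite repK clsM repK.
elim: s s_c => [_ | y s IH [-> s_c]]; rewrite [prodl _ _ _]/=; first by rewrite (mul1k HC).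
rewrite clsM repK -(mulkA HC).
exact: (dle_trans HC (dle_mul2l HC c (IH s_c)) cv_le).
Qed.

Definition Pc (i : 'I_m) : Cm m := cls (rsym (p_ i)).
Definition Qc (i : 'I_m) : Cm m := cls (rsym (q_ i)).

Lemma Cm_pq i j : Pc i * Qc j = kdelta (C_KA m) i j.
Proof.
rewrite -clsM (proj2 (cls_eqP _ _) (fun rho _ gens => gens.1 i j)).
by rewrite /kdelta; case: (i == j).
Qed.

Lemma Cm_qp : \sum_(i < m) Qc i * Pc i = 1.
Proof.
under eq_bigr do rewrite -clsM.
rewrite -(big_morph (@cls m) clsD (erefl : cls 0 = 0)).
by apply/cls_eqP => rho _ gens; apply: gens.2.
Qed.

End BraKetQuotient.

Theorem theorem11 (m : nat) (hm : 0 < m) :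
  exists f : C_KA m -> Mat_KA (C_KA m) m, KA_iso f.
Proof.
have HC := Cm_idem_semiring m.
have [unfoldC indC] := (@Cm_star_unfold_le m, @Cm_star_left_ind m).
exists (braket_mx (@Pc m) (@Qc m)); apply: semiring_iso_KA_iso.
- exact: mat_addC.
- exact: star_least_left_ind HC unfoldC indC.
- exact: (@mat_star_least _ HC unfoldC indC m).
- exists (braket_unmx (@Pc m) (@Qc m)).
    exact: braket_mxK (@Cm_qp m).
  exact: braket_unmxK (@Cm_pq m).
- exact: braket_mxD.
- exact: braket_mxM (@Cm_qp m).
- exact: braket_mx0.
- exact: braket_mx1 (@Cm_pq m).
Qed.
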